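(* Let $H_0$ be a bounded operator on a Hilbert space with $\|H_0\|=1$, finite-dimensional kernel, and a bounded reflexive generalized inverse. Let $\mathcal{S}$ be a set of bounded operators of unit norm (the perturbations in the symmetry class). Then $\mathrm{Ker}\,H_0$ is stable against every $w\in\mathcal{S}$ if and only if for every $w\in\mathcal{S}$ there is $\lambda_0>0$ such that $\dim\mathrm{Ker}(H_0+\lambda w)=\dim\mathrm{Ker}\,H_0$ for all real $\lambda$ with $|\lambda|<\lambda_0$.
   Context: A reflexive generalized inverse of $H_0$ is an operator $H_0^{(-1)}$ with $H_0^{(-1)}H_0H_0^{(-1)}=H_0^{(-1)}$ and $H_0H_0^{(-1)}H_0=H_0$. For a closed subspace $\mathcal{V}$, $P_{\mathcal{V}}$ is the orthogonal projector onto it. $\mathrm{Ker}\,H_0$ is stable against a perturbation $w$ if $\lim_{\lambda\to0,\lambda\in\mathbb{R}}P_{\mathrm{Ker}(H_0+\lambda w)}=P_{\mathrm{Ker}H_0}$ in operator norm. *)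

From HB Require Import structures.
From mathcomp Require Import all_boot all_order all_algebra.
From mathcomp Require Import all_classical all_reals all_analysis.
From mathcomp Require Import complex.
Set Implicit Arguments. Unset Strict Implicit. Unset Printing Implicit Defensive.
Import Order.TTheory GRing.Theory Num.Theory numFieldNormedType.Exports.
Local Open Scope classical_set_scope.
Local Open Scope ring_scope.
Local Open Scope complex_scope.

Section Hilbert.
Variables (R : realType) (V : lmodType R[i]) (ip : V -> V -> R[i]).

Definition hnorm (x : V) : R := Num.sqrt (complex.Re (ip x x)).

Definition is_hilbert : Prop :=
  [/\ (forall a x y z, ip (a *: x + y) z = a * ip x z + ip y z),
      (forall x y, ip y x = (ip x y)^*),
      (forall x, 0 <= ip x x),
      (forall x, ip x x = 0 -> x = 0) &
      (forall u : nat -> V,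
         (forall e : R, 0 < e -> exists N, forall m n, (N <= m)%N -> (N <= n)%N ->
              hnorm (u m - u n) < e) ->
         exists l, forall e : R, 0 < e -> exists N, forall n, (N <= n)%N ->
              hnorm (u n - l) < e)].

Definition bounded_op (A : V -> V) : Prop :=
  (forall a x y, A (a *: x + y) = a *: A x + A y) /\
  (exists M : R, forall x, hnorm (A x) <= M * hnorm x).

Definition opnorm (A : V -> V) : R :=
  sup [set hnorm (A x) | x in [set x | hnorm x <= 1]].

Definition Ker (A : V -> V) : set V := [set x | A x = 0].

Definition is_orth_proj (S : set V) (P : V -> V) : Prop :=
  forall x, S (P x) /\ (forall y, S y -> ip (x - P x) y = 0).

Definition has_dim (S : set V) (n : nat) : Prop :=
  exists b : 'I_n -> V,
    [/\ (forall i, S (b i)),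
        (forall c : 'I_n -> R[i], \sum_i c i *: b i = 0 -> forall i, c i = 0) &
        (forall x, S x -> exists c : 'I_n -> R[i], x = \sum_i c i *: b i)].

Definition finite_dim (S : set V) : Prop := exists n, has_dim S n.

Definition same_dim (S1 S2 : set V) : Prop := exists n, has_dim S1 n /\ has_dim S2 n.

Definition pert (H0 w : V -> V) (l : R) : V -> V := fun x => H0 x + l%:C *: w x.

Definition refl_ginv (H0 G : V -> V) : Prop :=
  (forall x, G (H0 (G x)) = G x) /\ (forall x, H0 (G (H0 x)) = H0 x).

(* Ker H0 is stable against w: P_{Ker(H0 + l w)} -> P_{Ker H0} in operator norm
   as l -> 0 (l real).  P is any choice of the orthogonal projectors (they are unique). *)
Definition ker_stable (H0 w : V -> V) : Prop :=
  forall P : R -> V -> V,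
    (forall l, is_orth_proj (Ker (pert H0 w l)) (P l)) ->
    is_orth_proj (Ker H0) (P 0) ->
    (fun l => opnorm (fun x => P l x - P 0 x)) @ (0 : R)^' --> (0 : R).

End Hilbert.

(* Write P_l for the orthogonal projector onto Ker (H0 + l w).  The theorem
   follows from two facts about orthogonal projectors P0, P1 onto subspaces
   T0, T1 of a Hilbert space:
   (a) if |P1 z - P0 z| <= c |z| for all z, with c < 1, then each projector is
       injective on the other subspace, so P1 maps a basis of T0 to a basis
       of T1 and dim T1 = dim T0;
   (b) if dim T1 = dim T0 is finite and |x - P0 x| <= eps |x| on T1, with
       eps <= 1/2, then |P1 z - P0 z| <= 3 eps |z| for all z;
   together with the kernel estimate |x - P_0 x| <= C |l| |x| on Ker (H0 + l w),
   which comes from the bounded reflexive generalized inverse G: the vector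
   x - G (H0 x) lies in Ker H0 and G (H0 x) = - l G (w x).
   Stability makes |P_l - P_0| < 1 near 0, so the dimension is constant by (a);
   conversely a constant dimension and the kernel estimate give
   |P_l - P_0| <= 3 C |l| by (b). *)

From HB Require Import structures.
From mathcomp Require Import all_boot all_order all_algebra.
From mathcomp Require Import all_classical all_reals all_analysis.
From mathcomp Require Import complex.
From mathcomp Require Import ring lra.
Set Implicit Arguments. Unset Strict Implicit. Unset Printing Implicit Defensive.
Import Order.TTheory GRing.Theory Num.Theory numFieldNormedType.Exports.
Local Open Scope classical_set_scope.
Local Open Scope ring_scope.

Lemma cvg0_of_eps (R : realType) (f : R -> R) :
  (forall e : R, 0 < e -> exists2 d : R, 0 < d &
     forall l, `|l| < d -> l != 0 -> `|f l| < e) ->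
  f @ (0 : R)^' --> (0 : R).
Proof.
move=> h; apply/cvgrPdist_lt => e e0.
have [d d0 hd] := h e e0.
apply/nbhs_normP; exists d => //= l /= hl hl0.
by rewrite sub0r normrN; apply: hd => //; rewrite -(normrN l) -(sub0r l).
Qed.

Lemma cvg0_eps (R : realType) (f : R -> R) :
  f @ (0 : R)^' --> (0 : R) ->
  forall e : R, 0 < e -> exists2 d : R, 0 < d &
    forall l, `|l| < d -> l != 0 -> `|f l| < e.
Proof.
move=> /cvgrPdist_lt h e e0.
have /nbhs_normP [d d0 hd] := h e e0.
exists d => // l hl hl0.
have := hd l; rewrite sub0r normrN; apply => //.
by rewrite /ball_ /= sub0r normrN.
Qed.

Lemma exists_nat (R : realType) (z : R) : exists N : nat, z < N%:R.
Proof.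
exists (Num.bound `|z|); apply: le_lt_trans (ler_norm z) _.
exact: archi_boundP.
Qed.

Definition recip (R : realType) (k : nat) : R := (k.+1%:R)^-1.

Lemma recip_gt0 (R : realType) k : 0 < recip R k.
Proof. by rewrite /recip invr_gt0 ltr0Sn. Qed.

Lemma recip_le1 (R : realType) k : recip R k <= 1.
Proof. by rewrite /recip invf_le1 ?ltr0Sn // ler1n. Qed.

Lemma recip_small (R : realType) (e : R) :
  0 < e -> exists N, forall k, (N <= k)%N -> recip R k < e.
Proof.
move=> e0; have [N hN] := exists_nat e^-1.
exists N => k hk; rewrite /recip -(invrK e) ltf_pV2 ?posrE ?ltr0Sn ?invr_gt0 //.
by apply: lt_le_trans hN _; rewrite ler_nat; exact: leq_trans hk (leqnSn k).
Qed.

(* A real quadratic t |-> -2 t r + t^2 q that is everywhere nonnegative has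
   no linear term; this is the variational core of orthogonality. *)
Lemma quad_ge0_lin0 (R : realType) (r q : R) :
  0 <= q -> (forall t, 0 <= - 2 * t * r + t ^+ 2 * q) -> r = 0.
Proof.
move=> q0 h; pose t := r / (q + 1).
have q1 : q + 1 != 0 by rewrite gt_eqF // ltr_wpDl.
have rt : r = t * (q + 1) by rewrite /t divfK.
have := h t; rewrite rt => ht.
have h2 : t ^+ 2 * (q + 2) <= 0 by nra.
have t0 : t = 0.
  apply/eqP; rewrite -sqrf_eq0 eq_le sqr_ge0 andbT.
  by rewrite -(pmulr_lle0 _ (_ : 0 < q + 2)) // ltr_wpDl.
by rewrite t0 mul0r.
Qed.

Section ComplexParts.
Local Open Scope complex_scope.
Variable R : realType.

Lemma Re_realM (t : R) (z : R[i]) : complex.Re (t%:C * z) = t * complex.Re z.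
Proof. by case: z => a b /=; rewrite mul0r subr0. Qed.
Lemma ReD (a b : R[i]) : complex.Re (a + b) = complex.Re a + complex.Re b.
Proof. by case: a; case: b. Qed.
Lemma ReN (a : R[i]) : complex.Re (- a) = - complex.Re a.
Proof. by case: a. Qed.
Lemma ReJ (a : R[i]) : complex.Re (a^*) = complex.Re a.
Proof. by case: a. Qed.

Lemma halfC_double (V : lmodType R[i]) (v : V) : (2^-1 : R)%:C *: (v + v) = v.
Proof.
rewrite -mulr2n -(scaler_nat 2 v) scalerA.
have -> : (2^-1 : R)%:C * 2%:R = 1.
  by apply/eqP; rewrite eq_complex /=; apply/andP; split; apply/eqP; field.
by rewrite scale1r.
Qed.

End ComplexParts.

Section Linear.
Variables (R : realType) (V : lmodType R[i]).

Definition linop (A : V -> V) := forall a x y, A (a *: x + y) = a *: A x + A y.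
Definition subsp (S : set V) := S 0 /\ (forall a x y, S x -> S y -> S (a *: x + y)).

Section LinearMap.
Variable A : V -> V.
Hypothesis hA : linop A.

Lemma lin0 : A 0 = 0.
Proof.
have := hA 1 0 0; rewrite scaler0 addr0 scale1r => /eqP.
by rewrite -subr_eq0 opprD addrA subrr sub0r oppr_eq0 => /eqP.
Qed.
Lemma linD x y : A (x + y) = A x + A y.
Proof. by have := hA 1 x y; rewrite !scale1r. Qed.
Lemma linZ a x : A (a *: x) = a *: A x.
Proof. by have := hA a x 0; rewrite !addr0 lin0 addr0. Qed.
Lemma linN x : A (- x) = - A x.
Proof. by rewrite -scaleN1r linZ scaleN1r. Qed.
Lemma linB x y : A (x - y) = A x - A y.
Proof. by rewrite linD linN. Qed.
Lemma linS n (c : 'I_n -> R[i]) (b : 'I_n -> V) :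
  A (\sum_i c i *: b i) = \sum_i c i *: A (b i).
Proof.
apply: (big_ind2 (fun u v => A u = v)) => [|u1 u2 v1 v2 <- <-|i _].
- exact: lin0.
- exact: linD.
- exact: linZ.
Qed.
Lemma Ker_subsp : subsp (Ker A).
Proof.
split; first exact: lin0.
by move=> a x y; rewrite /Ker /= hA => -> ->; rewrite scaler0 addr0.
Qed.
End LinearMap.

Lemma linop_sub (A B : V -> V) : linop A -> linop B -> linop (fun x => A x - B x).
Proof.
move=> hA hB a x y; rewrite hA hB scalerBr opprD !addrA; congr (_ + _).
by rewrite addrAC.
Qed.

Section Subspace.
Variable S : set V.
Hypothesis hS : subsp S.

Lemma sub0 : S 0. Proof. by case: hS. Qed.
Lemma subL a x y : S x -> S y -> S (a *: x + y). Proof. by case: hS => _; apply. Qed.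
Lemma subD x y : S x -> S y -> S (x + y).
Proof. by move=> hx hy; have := subL 1 hx hy; rewrite scale1r. Qed.
Lemma subZ a x : S x -> S (a *: x).
Proof. by move=> hx; have := subL a hx sub0; rewrite addr0. Qed.
Lemma subB x y : S x -> S y -> S (x - y).
Proof. by move=> hx hy; apply: subD => //; rewrite -scaleN1r; apply: subZ. Qed.
Lemma subS n (c : 'I_n -> R[i]) (b : 'I_n -> V) :
  (forall i, S (b i)) -> S (\sum_i c i *: b i).
Proof.
move=> hb; elim/big_rec: _ => [|i y _ hy]; first exact: sub0.
exact: subL.
Qed.
End Subspace.

Lemma sum_scale_mx n (c : 'rV[R[i]]_n) (M : 'I_n -> 'I_n -> R[i]) (b : 'I_n -> V) :
  \sum_j c 0 j *: (\sum_i M j i *: b i)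
  = \sum_i (c *m \matrix_(j, i) M j i) 0 i *: b i.
Proof.
under eq_bigr do rewrite scaler_sumr.
rewrite exchange_big /=; apply: eq_bigr => i _.
rewrite !mxE scaler_suml; apply: eq_bigr => j _.
by rewrite mxE scalerA.
Qed.

(* Basis exchange: n independent vectors of a space spanned by n vectors span
   it too (the change-of-coordinates matrix is injective, hence invertible). *)
Lemma indep_spans (T : set V) n (b e : 'I_n -> V) :
  (forall x, T x -> exists c : 'I_n -> R[i], x = \sum_i c i *: b i) ->
  (forall j, T (e j)) ->
  (forall c : 'I_n -> R[i], \sum_i c i *: e i = 0 -> forall i, c i = 0) ->
  forall x, T x -> exists c : 'I_n -> R[i], x = \sum_i c i *: e i.
Proof.
move=> hb he hind.
have [M hM] := choice (fun j => hb _ (he j)).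
pose A := \matrix_(j, i) M j i.
have coords (c : 'rV_n) : \sum_j c 0 j *: e j = \sum_i (c *m A) 0 i *: b i.
  by rewrite -sum_scale_mx; apply: eq_bigr => j _; rewrite -hM.
have uA : A \in unitmx.
  rewrite -row_free_unit; apply: inj_row_free => c cA.
  apply/rowP => j; rewrite mxE; apply: (hind (fun j => c 0 j)).
  by rewrite coords cA; apply: big1 => i _; rewrite mxE scale0r.
move=> x /hb [d ->].
exists (fun j => (\row_i d i *m invmx A) 0 j).
by rewrite coords mulmxKV //; apply: eq_bigr => i _; rewrite mxE.
Qed.

End Linear.

Section Hilbert.
Local Open Scope complex_scope.
Variables (R : realType) (V : lmodType R[i]) (ip : V -> V -> R[i]).
Hypothesis Hhil : is_hilbert ip.
Local Notation hn := (hnorm ip).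

Lemma ip_linl a x y z : ip (a *: x + y) z = a * ip x z + ip y z.
Proof. by case: Hhil => h _ _ _ _; apply: h. Qed.
Lemma ip_conj x y : ip y x = (ip x y)^*.
Proof. by case: Hhil => _ h _ _ _; apply: h. Qed.
Lemma ip_ge0 x : 0 <= ip x x.
Proof. by case: Hhil => _ _ h _ _; apply: h. Qed.
Lemma ip_eq0 x : ip x x = 0 -> x = 0.
Proof. by case: Hhil => _ _ _ h _; apply: h. Qed.

Lemma complete (u : nat -> V) :
  (forall e : R, 0 < e -> exists N, forall m n, (N <= m)%N -> (N <= n)%N ->
       hn (u m - u n) < e) ->
  exists l, forall e : R, 0 < e -> exists N, forall n, (N <= n)%N -> hn (u n - l) < e.
Proof. by case: Hhil => _ _ _ _; apply. Qed.

Lemma ip0l z : ip 0 z = 0.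
Proof.
have := ip_linl 1 0 0 z; rewrite scaler0 addr0 mul1r => /eqP.
by rewrite -subr_eq0 opprD addrA subrr sub0r oppr_eq0 => /eqP.
Qed.
Lemma ipDl x y z : ip (x + y) z = ip x z + ip y z.
Proof. by rewrite -[x]scale1r ip_linl mul1r scale1r. Qed.
Lemma ipZl a x z : ip (a *: x) z = a * ip x z.
Proof. by rewrite -[a *: x]addr0 ip_linl ip0l addr0. Qed.
Lemma ipNl x z : ip (- x) z = - ip x z.
Proof. by rewrite -scaleN1r ipZl mulN1r. Qed.
Lemma ipBl x y z : ip (x - y) z = ip x z - ip y z.
Proof. by rewrite ipDl ipNl. Qed.
Lemma ipZr a x z : ip z (a *: x) = a^* * ip z x.
Proof. by rewrite !(ip_conj _ z) ipZl rmorphM. Qed.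

(* The real part of the inner product and the squared norm, on which the
   metric estimates are carried out. *)
Definition reip x y := complex.Re (ip x y).
Definition sqn x := reip x x.

Lemma reipDl x y z : reip (x + y) z = reip x z + reip y z.
Proof. by rewrite /reip ipDl ReD. Qed.
Lemma reipNl x z : reip (- x) z = - reip x z.
Proof. by rewrite /reip ipNl ReN. Qed.
Lemma reipBl x y z : reip (x - y) z = reip x z - reip y z.
Proof. by rewrite reipDl reipNl. Qed.
Lemma reipC x y : reip x y = reip y x.
Proof. by rewrite /reip ip_conj ReJ. Qed.
Lemma reipDr x y z : reip z (x + y) = reip z x + reip z y.
Proof. by rewrite reipC reipDl !(reipC z). Qed.
Lemma reipNr x z : reip z (- x) = - reip z x.
Proof. by rewrite reipC reipNl reipC. Qed.
Lemma reipBr x y z : reip z (x - y) = reip z x - reip z y.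
Proof. by rewrite reipDr reipNr. Qed.
Lemma reipZl (t : R) x z : reip (t%:C *: x) z = t * reip x z.
Proof. by rewrite /reip ipZl Re_realM. Qed.
Lemma reipZr (t : R) x z : reip z (t%:C *: x) = t * reip z x.
Proof. by rewrite reipC reipZl reipC. Qed.

Lemma sqn_ge0 x : 0 <= sqn x.
Proof. by have := ip_ge0 x; rewrite lecE /= => /andP[]. Qed.
Lemma sqn_eq0 x : sqn x = 0 -> x = 0.
Proof.
move=> h; apply: ip_eq0; have := ip_ge0 x.
rewrite lecE /sqn /reip in h *; case: (ip x x) h => a b /= -> /andP[/eqP -> _] //.
Qed.
Lemma sqnD x y : sqn (x + y) = sqn x + 2 * reip x y + sqn y.
Proof. rewrite /sqn reipDl !reipDr (reipC y x); ring. Qed.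
Lemma sqnB x y : sqn (x - y) = sqn x - 2 * reip x y + sqn y.
Proof. rewrite /sqn reipBl !reipBr (reipC y x); ring. Qed.
Lemma sqnZ (t : R) x : sqn (t%:C *: x) = t ^+ 2 * sqn x.
Proof. by rewrite /sqn reipZl reipZr mulrA expr2. Qed.
Lemma sqnN x : sqn (- x) = sqn x.
Proof. by rewrite /sqn reipNl reipNr opprK. Qed.
Lemma sqn_pyth u v : reip u v = 0 -> sqn (u + v) = sqn u + sqn v.
Proof. by move=> h; rewrite sqnD h mulr0 addr0. Qed.
Lemma parallelogram a b : sqn (a + b) + sqn (a - b) = 2 * sqn a + 2 * sqn b.
Proof. rewrite sqnD sqnB; ring. Qed.

Lemma hnE x : hn x = Num.sqrt (sqn x). Proof. by []. Qed.
Lemma hn_ge0 x : 0 <= hn x. Proof. exact: sqrtr_ge0. Qed.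
Lemma hn2 x : hn x ^+ 2 = sqn x.
Proof. by rewrite hnE sqr_sqrtr // sqn_ge0. Qed.
Lemma hn_eq0 x : hn x = 0 -> x = 0.
Proof. by move=> h; apply: sqn_eq0; rewrite -hn2 h expr0n. Qed.
Lemma hn0 : hn 0 = 0.
Proof. by rewrite /hnorm ip0l sqrtr0. Qed.
Lemma hnN x : hn (- x) = hn x.
Proof. by rewrite !hnE sqnN. Qed.
Lemma hnZ (t : R) x : hn (t%:C *: x) = `|t| * hn x.
Proof.
by rewrite !hnE sqnZ sqrtrM ?sqrtr_sqr // sqr_ge0.
Qed.
Lemma hnBC x y : hn (x - y) = hn (y - x).
Proof. by rewrite -hnN opprB. Qed.

Lemma le_sqr (a b : R) : 0 <= b -> a ^+ 2 <= b ^+ 2 -> a <= b.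
Proof.
move=> b0 h.
have : `|a| <= b by rewrite -ler_sqr ?nnegrE ?normr_ge0 // real_normK ?num_real.
by apply: le_trans; apply: ler_norm.
Qed.

(* Cauchy-Schwarz, from the nonnegativity of the quadratic t |-> |x + t y|^2. *)
Lemma cauchy_schwarz x y : reip x y <= hn x * hn y.
Proof.
apply: le_sqr; first by rewrite mulr_ge0 ?hn_ge0.
rewrite exprMn !hn2.
have quad t : 0 <= sqn x + 2 * t * reip x y + t ^+ 2 * sqn y.
  by have := sqn_ge0 (x + t%:C *: y); rewrite sqnD sqnZ reipZr mulrA.
have [y0|ny0] := eqVneq (sqn y) 0.
  rewrite y0 mulr0.
  have [r0|r0] := eqVneq (reip x y) 0; first by rewrite r0 expr0n.
  have := quad (- (sqn x + 1) / (2 * reip x y)); rewrite y0 mulr0 addr0.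
  have -> : 2 * (- (sqn x + 1) / (2 * reip x y)) * reip x y = - (sqn x + 1).
    by field; rewrite r0.
  lra.
have yp : 0 < sqn y by rewrite lt_def ny0 sqn_ge0.
have := quad (- reip x y / sqn y).
have -> : sqn x + 2 * (- reip x y / sqn y) * reip x y + (- reip x y / sqn y) ^+ 2 * sqn y
   = sqn x - reip x y ^+ 2 / sqn y.
  by field; rewrite ny0.
by rewrite subr_ge0 ler_pdivrMr.
Qed.

Lemma hnD x y : hn (x + y) <= hn x + hn y.
Proof.
apply: le_sqr; first by rewrite addr_ge0 ?hn_ge0.
rewrite hn2 sqnD sqrrD !hn2; have := cauchy_schwarz x y; lra.
Qed.
Lemma hnB x y : hn (x - y) <= hn x + hn y.
Proof. by rewrite -(hnN y) hnD. Qed.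

Lemma hn_contract_eq0 x (c : R) : c < 1 -> hn x <= c * hn x -> x = 0.
Proof.
move=> c1 h; apply: hn_eq0; apply/eqP; rewrite eq_le hn_ge0 andbT.
have := hn_ge0 x; nra.
Qed.

Section Projector.
Variables (S : set V) (P : V -> V).
Hypotheses (hS : subsp S) (hP : is_orth_proj ip S P).

Lemma projS x : S (P x). Proof. by case: (hP x). Qed.
Lemma projO x y : S y -> ip (x - P x) y = 0. Proof. by case: (hP x) => _; apply. Qed.
Lemma projOr x y : S y -> reip (x - P x) y = 0.
Proof. by move=> h; rewrite /reip projO. Qed.

Lemma proj_uniq x p : S p -> (forall y, S y -> ip (x - p) y = 0) -> P x = p.
Proof.
move=> hp ho; apply/eqP; rewrite -subr_eq0; apply/eqP; apply: ip_eq0.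
have e : P x - p = (x - p) - (x - P x) by rewrite opprB [RHS]addrC addrA subrK.
have hs : S (P x - p) := subB hS (projS x) hp.
by rewrite {1}e ipBl ho // projO // subrr.
Qed.
Lemma proj_id x : S x -> P x = x.
Proof. by move=> hx; apply: proj_uniq => // y _; rewrite subrr ip0l. Qed.
Lemma proj_lin : linop P.
Proof.
move=> a x y; apply: proj_uniq; first exact (subL hS a (projS x) (projS y)).
move=> z hz.
have -> : a *: x + y - (a *: P x + P y) = a *: (x - P x) + (y - P y).
  by rewrite scalerBr opprD !addrA; congr (_ + _); rewrite addrAC.
by rewrite ip_linl !projO // mulr0 addr0.
Qed.

Lemma proj_sqn x : sqn x = sqn (P x) + sqn (x - P x).
Proof.
have {1}-> : x = P x + (x - P x) by rewrite addrC subrK.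
by rewrite sqn_pyth // reipC projOr //; apply: projS.
Qed.
Lemma proj_le x : hn (P x) <= hn x.
Proof.
apply: le_sqr; first exact: hn_ge0.
by rewrite !hn2 (proj_sqn x) lerDl sqn_ge0.
Qed.
Lemma projc_le x : hn (x - P x) <= hn x.
Proof.
apply: le_sqr; first exact: hn_ge0.
by rewrite !hn2 (proj_sqn x) lerDr sqn_ge0.
Qed.
Lemma proj_best x s : S s -> hn (x - P x) <= hn (x - s).
Proof.
move=> hs; apply: le_sqr; first exact: hn_ge0.
have -> : x - s = (x - P x) + (P x - s) by rewrite addrA subrK.
rewrite !hn2 [X in _ <= X]sqn_pyth ?lerDl ?sqn_ge0 //.
by apply: projOr; apply: (subB hS (projS x) hs).
Qed.
End Projector.


Definition closed_sub (S : set V) := forall (u : nat -> V) y, (forall n, S (u n)) ->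
  (forall e : R, 0 < e -> exists N, forall n, (N <= n)%N -> hn (u n - y) < e) -> S y.

(* A best approximation of x in a subspace S is an orthogonal projection of x:
   otherwise moving along a direction of S (real or imaginary) would improve it. *)
Lemma best_approx_orth (S : set V) x y : subsp S -> S y ->
  (forall s, S s -> hn (x - y) <= hn (x - s)) -> forall s, S s -> ip (x - y) s = 0.
Proof.
move=> hS Sy opt.
have reo s : S s -> reip (x - y) s = 0.
  move=> hs; apply: (quad_ge0_lin0 (sqn_ge0 s)) => t.
  have := opt _ (subL hS t%:C hs Sy).
  have -> : x - (t%:C *: s + y) = (x - y) - t%:C *: s by rewrite opprD addrA addrAC.
  move/(lerXn2r 2); rewrite !nnegrE !hn_ge0 => /(_ isT isT).
  rewrite !hn2 [sqn (x - y - _)]sqnB sqnZ reipZr; lra.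
move=> s hs; move: (reo s hs) (reo _ (subZ hS 'i hs)).
rewrite /reip ipZr; case: (ip (x - y) s) => a b /= ->.
have -> : 0 * 0 - -1 * b = b by ring.
by move=> ->.
Qed.

Section MinimizingSequence.
Variables (S : set V) (x : V) (d : R) (u : nat -> V).
Hypotheses (hS : subsp S) (d0 : 0 <= d) (hd : forall s, S s -> d <= hn (x - s)).
Hypotheses (Su : forall k, S (u k)) (hu : forall k, hn (x - u k) < d + recip R k).

(* Parallelogram law applied to x - u m and x - u n, whose midpoint is at
   distance >= d from x. *)
Lemma minimizing_gap m n : sqn (u m - u n) <= 2 * (2 * d + 1) * (recip R m + recip R n).
Proof.
pose a := x - u m; pose b := x - u n.
have Smid : S ((2^-1 : R)%:C *: (u m + u n)) by exact (subZ hS _ (subD hS (Su m) (Su n))).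
have e0 : u m - u n = b - a by rewrite /a /b opprB [RHS]addrC addrA subrK.
have e1 : (2^-1 : R)%:C *: (b + a) = x - (2^-1 : R)%:C *: (u m + u n).
  rewrite /a /b -[in RHS](halfC_double x) -scalerBr; congr (_ *: _).
  by rewrite opprD addrACA [- u n + _]addrC.
have h1 : d ^+ 2 <= (2^-1) ^+ 2 * sqn (b + a).
  rewrite -sqnZ e1 -hn2; apply: lerXn2r; rewrite ?nnegrE ?hn_ge0 //; exact: hd.
have close k : sqn (x - u k) <= (d + recip R k) ^+ 2.
  rewrite -hn2; apply: lerXn2r; rewrite ?nnegrE ?hn_ge0 ?addr_ge0 ?(ltW (recip_gt0 R k)) //.
  exact: ltW.
have ha := close m; have hb := close n; have hp := parallelogram b a.
rewrite e0; have := recip_le1 R m; have := recip_le1 R n.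
have := recip_gt0 R m; have := recip_gt0 R n.
move: h1 ha hb hp d0; rewrite -/a -/b; nra.
Qed.

Lemma minimizing_cauchy : forall e : R, 0 < e -> exists N, forall m n,
  (N <= m)%N -> (N <= n)%N -> hn (u m - u n) < e.
Proof.
move=> e e0; have K0 : 0 < 4 * (2 * d + 1) by move: d0; lra.
have e2K : 0 < e ^+ 2 / (4 * (2 * d + 1)) by rewrite divr_gt0 // exprn_gt0.
have [N hN] := recip_small e2K.
exists N => m n hm hn'.
have := hN m hm; have := hN n hn'; rewrite !ltr_pdivlMr // => rn rm.
have := minimizing_gap m n; rewrite -hn2 => gap.
have := hn_ge0 (u m - u n); nra.
Qed.

Lemma minimizing_limit y :
  (forall e : R, 0 < e -> exists N, forall n, (N <= n)%N -> hn (u n - y) < e) ->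
  hn (x - y) <= d.
Proof.
move=> hy; apply/ler_addgt0Pr => e e0.
have e2 : 0 < e / 2 by rewrite divr_gt0.
have [N1 hN1] := hy _ e2; have [N2 hN2] := recip_small e2.
pose k := maxn N1 N2.
have h1 := hN1 k (leq_maxl _ _); have h2 := hN2 k (leq_maxr _ _); have h3 := hu k.
have : hn (x - y) <= hn (x - u k) + hn (u k - y).
  by have := hnD (x - u k) (u k - y); rewrite addrA subrK.
lra.
Qed.
End MinimizingSequence.

Lemma proj_exists (S : set V) : subsp S -> closed_sub S -> exists P, is_orth_proj ip S P.
Proof.
move=> hS hC.
suff /choice[P hP] : forall x, exists p, S p /\ forall y, S y -> ip (x - p) y = 0.
  by exists P.
move=> x; pose D := [set r | exists2 s, S s & r = hn (x - s)].
have D0 : D !=set0 by exists (hn (x - 0)); exists 0 => //; exact: sub0.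
have Dlb : lbound D 0 by move=> r [s _ ->]; exact: hn_ge0.
have d0 : 0 <= inf D by exact: lb_le_inf.
have hd s : S s -> inf D <= hn (x - s).
  by move=> hs; apply: ge_inf; [exists 0 | exists s].
have /choice[u hu] : forall k, exists s, S s /\ hn (x - s) < inf D + recip R k.
  move=> k; have lt : inf D < inf D + recip R k by rewrite ltrDl recip_gt0.
  by have [_ [s hs ->] hr] := inf_lt D0 lt; exists s.
have Su k : S (u k) := (hu k).1.
have hu' k : hn (x - u k) < inf D + recip R k := (hu k).2.
have [y hy] := complete (minimizing_cauchy hS d0 hd Su hu').
have Sy : S y := hC u y Su hy.
exists y; split; first exact: Sy.
apply: best_approx_orth => // s hs.
exact: le_trans (minimizing_limit hu' hy) (hd s hs).
Qed.

Lemma bound_pos A : bounded_op ip A -> exists K : R, 0 < K /\ forall x, hn (A x) <= K * hn x.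
Proof.
case=> _ [M hM]; exists (`|M| + 1); split; first by rewrite ltr_wpDl.
move=> x; apply: le_trans (hM x) _; apply: ler_wpM2r; first exact: hn_ge0.
by apply: le_trans (ler_norm M) _; rewrite lerDl.
Qed.

Lemma ker_closed A : bounded_op ip A -> closed_sub (Ker A).
Proof.
move=> hA; have [K [K0 hK]] := bound_pos hA.
move=> u y hu hy; rewrite /Ker /=; apply: hn_eq0.
apply/eqP; rewrite eq_le hn_ge0 andbT; apply/ler_addgt0Pr => e e0; rewrite add0r.
have [N hN] := hy (e / K) (divr_gt0 e0 K0).
have := hN N (leqnn N).
have -> : A y = A (y - u N) by rewrite (linB hA.1) (hu N) subr0.
rewrite hnBC => h; apply: le_trans (hK _) _.
have -> : e = K * (e / K) by rewrite mulrC divfK // gt_eqF.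
by rewrite ler_pM2l // ltW.
Qed.

Lemma ker_proj_exists A : bounded_op ip A -> exists P, is_orth_proj ip (Ker A) P.
Proof. by move=> hA; apply: proj_exists (Ker_subsp hA.1) (ker_closed hA). Qed.

Section OperatorNorm.
Variables (A : V -> V) (c : R).
Hypotheses (c0 : 0 <= c) (hAc : forall x, hn (A x) <= c * hn x).

Lemma opnorm_le : opnorm ip A <= c.
Proof.
apply: ge_sup; first by exists (hn (A 0)); exists 0 => //=; rewrite hn0.
move=> r [x /= hx <-]; apply: le_trans (hAc x) _.
by rewrite -[leRHS]mulr1 ler_wpM2l.
Qed.

Lemma opnorm_ub x : hn x <= 1 -> hn (A x) <= opnorm ip A.
Proof.
move=> hx; apply: ub_le_sup; last by exists x.
exists c => r [y /= hy <-]; apply: le_trans (hAc y) _.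
by rewrite -[leRHS]mulr1 ler_wpM2l.
Qed.

Lemma opnorm_ge0 : 0 <= opnorm ip A.
Proof. by apply: le_trans (opnorm_ub (_ : hn 0 <= 1)); rewrite ?hn0 ?hn_ge0. Qed.

Lemma opnorm_pt : linop A -> forall x, hn (A x) <= opnorm ip A * hn x.
Proof.
move=> lin x; have [x0|xn0] := eqVneq (hn x) 0.
  by rewrite x0 mulr0 (hn_eq0 x0) (lin0 lin) hn0.
have xp : 0 < hn x by rewrite lt_def xn0 hn_ge0.
have := opnorm_ub (_ : hn ((hn x)^-1%:C *: x) <= 1).
rewrite (linZ lin) !hnZ ger0_norm ?invr_ge0 ?hn_ge0 // mulVf // => /(_ (lexx _)).
by rewrite ler_pdivrMl // mulrC.
Qed.
End OperatorNorm.

Lemma proj_diff_opnorm (T0 T1 : set V) (P0 P1 : V -> V) :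
  subsp T0 -> subsp T1 -> is_orth_proj ip T0 P0 -> is_orth_proj ip T1 P1 ->
  forall z, hn (P1 z - P0 z) <= opnorm ip (fun x => P1 x - P0 x) * hn z.
Proof.
move=> s0 s1 hP0 hP1; apply: (opnorm_pt (c := 2)) => //.
  move=> x; apply: le_trans (hnB _ _) _.
  by have := proj_le hP0 x; have := proj_le hP1 x; lra.
exact: linop_sub (proj_lin s1 hP1) (proj_lin s0 hP0).
Qed.


Lemma small_gap_inj (T : set V) (P Q : V -> V) (c : R) :
  subsp T -> is_orth_proj ip T P -> c < 1 -> (forall z, hn (P z - Q z) <= c * hn z) ->
  forall x, T x -> Q x = 0 -> x = 0.
Proof.
move=> sT hP c1 hz x Tx Qx; apply: (hn_contract_eq0 c1).
by have := hz x; rewrite (proj_id sT hP Tx) Qx subr0.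
Qed.

(* (a) Projectors at distance less than 1 have ranges of the same dimension:
   P1 maps a basis of T0 to a basis of T1. *)
Lemma same_dim_of_small_gap (T0 T1 : set V) (P0 P1 : V -> V) n (c : R) :
  subsp T0 -> subsp T1 -> is_orth_proj ip T0 P0 -> is_orth_proj ip T1 P1 ->
  c < 1 -> (forall z, hn (P1 z - P0 z) <= c * hn z) -> has_dim T0 n -> has_dim T1 n.
Proof.
move=> s0 s1 hP0 hP1 c1 hz [b [bT0 bind bspan]].
have l0 := proj_lin s0 hP0; have l1 := proj_lin s1 hP1.
have inj0 := small_gap_inj s1 hP1 c1 hz.
have inj1 : forall y, T0 y -> P1 y = 0 -> y = 0.
  by apply: (small_gap_inj s0 hP0 c1) => z; rewrite hnBC; apply: hz.
have bind1 a : \sum_i a i *: P1 (b i) = 0 -> forall i, a i = 0.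
  by move=> hc; apply: bind; apply: inj1; [exact (subS s0 a bT0) | rewrite (linS l1)].
have bind01 a : \sum_i a i *: P0 (P1 (b i)) = 0 -> forall i, a i = 0.
  move=> hc; apply: bind1; apply: inj0; last by rewrite (linS l0).
  exact (subS s1 a (fun i => projS hP1 (b i))).
exists (fun i => P1 (b i)); split => [i|//|x Tx]; first exact (projS hP1 (b i)).
have [a ha] := indep_spans bspan (fun j => projS hP0 (P1 (b j))) bind01 (projS hP0 x).
exists a; apply/eqP; rewrite -subr_eq0; apply/eqP; apply: inj0.
  exact (subB s1 Tx (subS s1 a (fun i => projS hP1 (b i)))).
by rewrite (linB l0) (linS l0) ha subrr.
Qed.

Section NearbyProjectors.
Variables (T0 T1 : set V) (P0 P1 : V -> V) (n : nat) (eps : R).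
Hypotheses (s0 : subsp T0) (s1 : subsp T1).
Hypotheses (hP0 : is_orth_proj ip T0 P0) (hP1 : is_orth_proj ip T1 P1).
Hypotheses (dim0 : has_dim T0 n) (dim1 : has_dim T1 n).
Hypotheses (eps0 : 0 <= eps) (eps_half : eps <= 2^-1).
Hypothesis close : forall x, T1 x -> hn (x - P0 x) <= eps * hn x.

(* P0 is injective on T1, hence by equality of dimensions onto T0. *)
Lemma near_proj_onto y : T0 y -> exists x, T1 x /\ y = P0 x.
Proof.
case: dim0 => b [_ _ bspan]; case: dim1 => b' [b'T1 b'ind _].
have l0 := proj_lin s0 hP0.
have eps1 : eps < 1 by move: eps_half; lra.
have ind c : \sum_i c i *: P0 (b' i) = 0 -> forall i, c i = 0.
  move=> hc; apply: b'ind; apply: (hn_contract_eq0 eps1).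
  by have := close (subS s1 c b'T1); rewrite (linS l0) hc subr0.
move=> Ty; have [c ->] := indep_spans bspan (fun j => projS hP0 (b' j)) ind Ty.
by exists (\sum_i c i *: b' i); split; [exact (subS s1 c b'T1) | rewrite (linS l0)].
Qed.

Lemma near_proj_back y : T0 y -> hn (y - P1 y) <= 2 * eps * hn y.
Proof.
move=> Ty; have [x [Tx ->]] := near_proj_onto Ty.
have hx := close Tx.
have hx2 : hn x <= hn (P0 x) + hn (x - P0 x).
  by have := hnD (P0 x) (x - P0 x); rewrite addrC subrK.
have best := proj_best s1 hP1 (P0 x) Tx; rewrite [hn (P0 x - x)]hnBC in best.
have hxP : hn x <= 2 * hn (P0 x) by have := hn_ge0 x; move: eps_half eps0; nra.
have : eps * hn x <= eps * (2 * hn (P0 x)) by apply: ler_wpM2l.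
lra.
Qed.

Lemma near_proj_complement z : hn (P0 (z - P1 z)) <= 2 * eps * hn (z - P1 z).
Proof.
set u := z - P1 z; set v := P0 u.
have Tv : T0 v := projS hP0 u.
have o1 : reip (u - v) v = 0 := projOr hP0 u Tv.
have o2 : reip u (P1 v) = 0 := projOr hP1 z (projS hP1 v).
have sqn_v : sqn v = reip u (v - P1 v).
  by rewrite reipBr o2 subr0; move: o1; rewrite reipBl /sqn; lra.
have cs := cauchy_schwarz u (v - P1 v); rewrite -sqn_v -hn2 in cs.
have h : hn v ^+ 2 <= (2 * eps * hn u) * hn v.
  apply: le_trans cs _; rewrite mulrC [X in _ <= X]mulrAC.
  by apply: ler_wpM2r; [exact: hn_ge0 | exact: near_proj_back].
have k0 : 0 <= 2 * eps * hn u by rewrite !mulr_ge0 ?hn_ge0.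
have := hn_ge0 v; move: h k0; move: (hn v) (2 * eps * hn u) => a k; nra.
Qed.

(* The bound (b), from P1 z - P0 z = (P1 z - P0 (P1 z)) - P0 (z - P1 z). *)
Lemma small_gap_of_same_dim z : hn (P1 z - P0 z) <= 3 * eps * hn z.
Proof.
have l0 := proj_lin s0 hP0.
have -> : P1 z - P0 z = (P1 z - P0 (P1 z)) - P0 (z - P1 z).
  by rewrite (linB l0) opprB addrA subrK.
apply: le_trans (hnB _ _) _.
have := close (projS hP1 z); have := near_proj_complement z; have := proj_le hP1 z.
have := projc_le hP1 z; have := hn_ge0 z; have := hn_ge0 (P1 z).
have := hn_ge0 (z - P1 z); move: eps0; nra.
Qed.
End NearbyProjectors.

Section Perturbation.
Variables (H0 w : V -> V).
Hypotheses (bH0 : bounded_op ip H0) (bw : bounded_op ip w).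

Lemma pert_lin l : linop (pert H0 w l).
Proof.
move=> a x y; rewrite /pert bH0.1 bw.1 !scalerDr !scalerA [_ * a]mulrC.
by rewrite addrACA.
Qed.

Lemma pert_bnd l : bounded_op ip (pert H0 w l).
Proof.
split; first exact: pert_lin.
have [K1 [K10 h1]] := bound_pos bH0; have [K2 [K20 h2]] := bound_pos bw.
exists (K1 + `|l| * K2) => x; rewrite /pert.
apply: le_trans (hnD _ _) _; rewrite hnZ.
have := h1 x; have := h2 x; have := normr_ge0 l; have := hn_ge0 (w x); nra.
Qed.

Lemma ker_pert0 : Ker (pert H0 w 0) = Ker H0.
Proof. by apply/funext => x; rewrite /Ker /pert /= rmorph0 scale0r addr0. Qed.

(* Kernel estimate: x in Ker (H0 + l w) is within C |l| |x| of Ker H0, since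
   x - G (H0 x) lies in Ker H0 and G (H0 x) = - l G (w x). *)
Lemma ker_pert_estimate G : bounded_op ip G -> refl_ginv H0 G ->
  exists C : R, 0 < C /\ forall P0, is_orth_proj ip (Ker H0) P0 ->
    forall l x, Ker (pert H0 w l) x -> hn (x - P0 x) <= C * `|l| * hn x.
Proof.
move=> bG hG; have [KG [KG0 hKG]] := bound_pos bG; have [Kw [Kw0 hKw]] := bound_pos bw.
exists (KG * Kw); split; first exact: mulr_gt0.
move=> P0 hP0 l x hx.
have hx' : H0 x = - (l%:C *: w x) by apply/eqP; rewrite -addr_eq0; apply/eqP.
have hk : Ker H0 (x - G (H0 x)) by rewrite /Ker /= (linB bH0.1) hG.2 subrr.
apply: le_trans (proj_best (Ker_subsp bH0.1) hP0 x hk) _.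
have -> : x - (x - G (H0 x)) = G (H0 x) by rewrite opprB addrC subrK.
apply: le_trans (hKG _) _; rewrite hx' hnN hnZ.
have := hKw x; have := normr_ge0 l; have := hn_ge0 (w x); have := hn_ge0 x.
move=> *; rewrite -!mulrA; apply: ler_wpM2l; first exact: ltW.
nra.
Qed.

(* Stability forces |P_l - P_0| < 1 near 0, hence a constant dimension by (a). *)
Lemma const_dim_of_stable n : has_dim (Ker H0) n -> ker_stable ip H0 w ->
  exists l0 : R, 0 < l0 /\
    forall l : R, `|l| < l0 -> same_dim (Ker (pert H0 w l)) (Ker H0).
Proof.
move=> dim0 hst.
have /choice[P hP] : forall l, exists P, is_orth_proj ip (Ker (pert H0 w l)) P.
  by move=> l; exact: ker_proj_exists (pert_bnd l).
have hP0 : is_orth_proj ip (Ker H0) (P 0) by rewrite -ker_pert0; exact: hP.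
have [d d0 hd] := cvg0_eps (hst P hP hP0) ltr01.
exists d; split => // l hl; exists n; split => //.
have [->|l0] := eqVneq l 0; first by rewrite ker_pert0.
have sK0 := Ker_subsp bH0.1; have sKl := Ker_subsp (pert_lin l).
apply: (same_dim_of_small_gap (c := opnorm ip (fun x => P l x - P 0 x))
  sK0 sKl hP0 (hP l) _ _ dim0); last exact (proj_diff_opnorm sK0 sKl hP0 (hP l)).
exact: le_lt_trans (ler_norm _) (hd l hl l0).
Qed.

(* A constant dimension and the kernel estimate give |P_l - P_0| <= 3 C |l|
   by (b). *)
Lemma stable_of_const_dim G : bounded_op ip G -> refl_ginv H0 G ->
  (exists l0 : R, 0 < l0 /\
    forall l : R, `|l| < l0 -> same_dim (Ker (pert H0 w l)) (Ker H0)) ->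
  ker_stable ip H0 w.
Proof.
move=> bG hG [l0 [l00 hl0]] P hP hP0.
have [C [C0 hC]] := ker_pert_estimate bG hG.
apply: cvg0_of_eps => e e0.
exists (Num.min l0 (Num.min (2 * C)^-1 (e / (6 * C)))).
  by rewrite !lt_min l00 invr_gt0 mulr_gt0 // divr_gt0 // mulr_gt0.
move=> l; rewrite !lt_min => /and3P[hl1 hl2 hl3] ln0.
have [m [dim_l dim0]] := hl0 l hl1.
move: hl2; rewrite -[X in _ < X]div1r ltr_pdivlMr ?mulr_gt0 // => hl2.
move: hl3; rewrite ltr_pdivlMr ?mulr_gt0 // => hl3.
have eps0 : 0 <= C * `|l| by rewrite mulr_ge0 // ltW.
have eps_half : C * `|l| <= 2^-1.
  by rewrite -[X in _ <= X]div1r ler_pdivlMr //; have := normr_ge0 l; nra.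
have gap := small_gap_of_same_dim (Ker_subsp bH0.1) (Ker_subsp (pert_lin l)) hP0 (hP l)
  dim0 dim_l eps0 eps_half (hC _ hP0 l).
have c0 : 0 <= 3 * (C * `|l|) by rewrite mulr_ge0.
rewrite ger0_norm; last exact: opnorm_ge0 c0 gap.
by apply: le_lt_trans (opnorm_le c0 gap) _; have := normr_ge0 l; nra.
Qed.
End Perturbation.

End Hilbert.

Theorem mainTheorem12 (R : realType) (V : lmodType R[i]) (ip : V -> V -> R[i])
  (H0 : V -> V) (S : set (V -> V)) :
  is_hilbert ip ->
  bounded_op ip H0 -> opnorm ip H0 = 1 ->
  finite_dim (Ker H0) ->
  (exists G : V -> V, bounded_op ip G /\ refl_ginv H0 G) ->
  (forall w, S w -> bounded_op ip w /\ opnorm ip w = 1) ->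
  ((forall w, S w -> ker_stable ip H0 w) <->
   (forall w, S w -> exists l0 : R, 0 < l0 /\
      forall l : R, `|l| < l0 -> same_dim (Ker (pert H0 w l)) (Ker H0))).
Proof.
move=> Hhil bH0 _ [n dim0] [G [bG hG]] hS; split.
- move=> hst w Sw.
  exact (const_dim_of_stable Hhil bH0 (hS w Sw).1 dim0 (hst w Sw)).
- move=> hdim w Sw.
  exact (stable_of_const_dim Hhil bH0 (hS w Sw).1 bG hG (hdim w Sw)).
Qed.
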